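(* Let $G$ be a graph and let $U$ be the set of vertices $u\in V(G)$ such that the connected component of $G$ containing $u$ is a complete graph. Then $\mu_\alpha(G)=\mu_\alpha(G-U)$.
   Context: All graphs are finite and simple; the null graph is allowed. For a graph $H$, $\alpha(H)$ is the maximum size of an independent set, $i(H)$ the minimum size of an inclusion-maximal independent set (both $0$ for the null graph), and $\mu_\alpha(H)=\alpha(H)-i(H)$. *)

(* A finite simple graph is a symmetric irreflexive relation
   e on a finType T.  Graph parameters are defined for the subgraph induced
   by a vertex set S : {set T}; the whole graph is S = [set: T]. *)
From mathcomp Require Import all_boot.
Set Implicit Arguments. Unset Strict Implicit. Unset Printing Implicit Defensive.

Section Defs.
Variables (T : finType) (e : rel T).

Definition stable (A : {set T}) : bool :=
  [forall x in A, forall y in A, ~~ e x y].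

Definition indep_in (S A : {set T}) : bool := (A \subset S) && stable A.

Definition maximal_indep_in (S A : {set T}) : bool :=
  indep_in S A &&
  [forall B : {set T}, (A \proper B) ==> ~~ indep_in S B].

Definition alpha_in (S : {set T}) : nat :=
  \max_(A : {set T} | indep_in S A) #|A|.

(* i(G[S]) : minimum size of a maximal independent set; the default #|S|
   is an upper bound on all such sizes, and a maximal independent set
   always exists (set0 when S is empty), so this is the true minimum. *)
Definition i_in (S : {set T}) : nat :=
  \big[minn/#|S|]_(A : {set T} | maximal_indep_in S A) #|A|.

Definition mu_alpha_in (S : {set T}) : nat := alpha_in S - i_in S.

Definition component (u : T) : {set T} := [set v | connect e u v].

Definition complete_component (u : T) : bool :=
  [forall v in component u, forall w in component u, (v != w) ==> e v w].

Definition Ucomp : {set T} := [set u | complete_component u].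

End Defs.

(* Vertices lying in complete components have no neighbours outside U, so G
   is the disjoint union of G[U] and G - U.  Both alpha and i are additive
   over such a splitting: independent sets, and likewise maximal independent
   sets, of G are exactly the unions of those of the two parts.  In G[U] an
   independent set meets each component, a clique, at most once, whereas a
   maximal one dominates every vertex and hence meets each component, so
   alpha(G[U]) = i(G[U]) and the two contributions of U cancel in mu_alpha. *)
From HB Require Import structures.
From mathcomp Require Import all_boot.

Set Implicit Arguments.
Unset Strict Implicit.
Unset Printing Implicit Defensive.

#[local] HB.instance Definition _ := SemiGroup.isComLaw.Build nat minn minnA minnC.

Section IndependentSets.
Variables (T : finType) (e : rel T).

Lemma stableP (A : {set T}) :
  reflect {in A &, forall x y, ~~ e x y} (stable e A).
Proof.
apply: (iffP forall_inP) => [Astable x y xA yA | Astable x xA].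
  by have /forall_inP := Astable x xA; apply.
by apply/forall_inP => y yA; apply: Astable.
Qed.

Lemma maximal_indep_inP (S A : {set T}) :
  reflect (indep_in e S A /\ forall B : {set T}, A \proper B -> ~~ indep_in e S B)
          (maximal_indep_in e S A).
Proof.
apply: (iffP andP) => [[indA /forallP maxA] | [indA maxA]]; split => //.
  by move=> B AB; apply: (implyP (maxA B)).
by apply/forallP => B; apply/implyP; apply: maxA.
Qed.

Lemma stableS (A B : {set T}) : B \subset A -> stable e A -> stable e B.
Proof.
by move=> /subsetP BA /stableP Astable; apply/stableP => x y /BA xA /BA; apply: Astable.
Qed.

Lemma indep_inI (S A M : {set T}) : indep_in e S M -> indep_in e A (M :&: A).
Proof. by case/andP => _ Mstable; rewrite /indep_in subsetIr (stableS (subsetIl _ _)). Qed.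

Lemma leq_card_alpha_in (S A : {set T}) : indep_in e S A -> #|A| <= alpha_in e S.
Proof. exact: (@leq_bigmax_cond _ _ (fun A : {set T} => #|A|)). Qed.

Lemma alpha_in_attained (S : {set T}) :
  exists2 A, indep_in e S A & #|A| = alpha_in e S.
Proof.
have set0_indep : indep_in e S set0.
  by rewrite /indep_in sub0set; apply/stableP => x y; rewrite inE.
have some_indep : 0 < #|[pred A : {set T} | indep_in e S A]|.
  by apply/card_gt0P; exists set0.
have [A indA cardA] := eq_bigmax_cond (fun A : {set T} => #|A|) some_indep.
by exists A; rewrite // /alpha_in cardA.
Qed.

Lemma maximal_indep_in_alpha (S : {set T}) :
  exists2 A, maximal_indep_in e S A & #|A| = alpha_in e S.
Proof.
have [A indA cardA] := alpha_in_attained S.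
exists A => //; apply/maximal_indep_inP; split => // B AB.
by apply: contraTN (proper_card AB) => /leq_card_alpha_in; rewrite -cardA leqNgt.
Qed.

Lemma i_in_leq_card (S A : {set T}) : maximal_indep_in e S A -> i_in e S <= #|A|.
Proof. by move=> maxA; rewrite /i_in (bigD1 A) //= geq_minl. Qed.

Lemma i_in_attained (S : {set T}) :
  exists2 A, maximal_indep_in e S A & #|A| = i_in e S.
Proof.
suff [A maxA cardA] : exists2 A, maximal_indep_in e S A & #|A| <= i_in e S.
  by exists A => //; apply/eqP; rewrite eqn_leq cardA i_in_leq_card.
apply: (big_ind (fun n => exists2 A, maximal_indep_in e S A & #|A| <= n)) => //.
- have [A maxA _] := maximal_indep_in_alpha S; exists A => //.
  by case/maximal_indep_inP: maxA => /andP[AS _] _; apply: subset_leq_card.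
- move=> m n [A maxA Am] [B maxB Bn]; case: (leqP m n) => [mn | nm].
    by exists A; rewrite // (minn_idPl mn).
  by exists B; rewrite // (minn_idPr (ltnW nm)).
- by move=> A maxA; exists A.
Qed.

Lemma i_in_leq_alpha_in (S : {set T}) : i_in e S <= alpha_in e S.
Proof. by have [A /i_in_leq_card maxA <-] := maximal_indep_in_alpha S. Qed.

End IndependentSets.

Lemma cardsU_subC (T : finType) (A M1 M2 : {set T}) :
  M1 \subset A -> M2 \subset ~: A -> #|M1 :|: M2| = #|M1| + #|M2|.
Proof.
move=> M1A M2A; have := setISS M1A M2A; rewrite setICr subset0 => /eqP M12_0.
by rewrite -cardsUI M12_0 cards0 addn0.
Qed.

Section SimpleGraph.
Variables (T : finType) (e : rel T).
Hypotheses (e_sym : symmetric e) (e_irr : irreflexive e).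

Lemma maximal_indep_in_domP (S M : {set T}) :
  reflect (indep_in e S M /\ {in S :\: M, forall x, exists2 y, y \in M & e x y})
          (maximal_indep_in e S M).
Proof.
apply: (iffP idP) => [/maximal_indep_inP[indM maxM] | [indM domM]].
  split => // x /setDP[xS xM]; case/andP: (indM) => MS /stableP Mstable.
  have M_xM : M \proper x |: M by rewrite properUr // sub1set.
  apply/exists_inP; apply: contraTT (maxM _ M_xM) => /exists_inP no_edge.
  rewrite negbK /indep_in subUset sub1set xS MS /=.
  apply/stableP => a b; rewrite !inE.
  case/predU1P => [-> | aM] /predU1P [-> | bM].
  - by rewrite e_irr.
  - by apply/negP => exb; apply: no_edge; exists b.
  - by rewrite e_sym; apply/negP => exa; apply: no_edge; exists a.
  - exact: Mstable.
apply/maximal_indep_inP; split => // B /properP[MB [x xB xM]].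
apply/negP => /andP[/subsetP BS /stableP Bstable].
have [y yM exy] : exists2 y, y \in M & e x y by apply: domM; rewrite inE xM BS.
by have := Bstable x y xB (subsetP MB y yM); rewrite exy.
Qed.

Definition separated (A : {set T}) := forall x y, x \in A -> y \notin A -> ~~ e x y.

Lemma separatedC (A : {set T}) : separated A -> separated (~: A).
Proof. by move=> A_sep x y; rewrite !inE negbK => xA yA; rewrite e_sym A_sep. Qed.

Section Separated.
Variable A : {set T}.
Hypothesis A_sep : separated A.

Lemma stableU_separated (B C : {set T}) : B \subset A -> C \subset ~: A ->
  stable e B -> stable e C -> stable e (B :|: C).
Proof.
move=> /subsetP BA /subsetP CA /stableP Bstable /stableP Cstable.
apply/stableP => x y /setUP[xB | xC] /setUP[yB | yC].
- exact: Bstable.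
- by apply: A_sep (BA _ xB) _; rewrite -in_setC CA.
- by rewrite e_sym; apply: A_sep (BA _ yB) _; rewrite -in_setC CA.
- exact: Cstable.
Qed.

Lemma maximal_indep_inI (M : {set T}) :
  maximal_indep_in e [set: T] M -> maximal_indep_in e A (M :&: A).
Proof.
case/maximal_indep_in_domP => indM domM; apply/maximal_indep_in_domP.
split=> [|x]; first exact: indep_inI indM.
case/setDP=> xA; rewrite inE xA andbT => xM.
have [y yM exy] : exists2 y, y \in M & e x y by apply: domM; rewrite !inE xM.
exists y => //; rewrite inE yM /=.
by apply: contraLR exy => /(A_sep xA).
Qed.

Lemma maximal_indep_inU (M1 M2 : {set T}) :
  maximal_indep_in e A M1 -> maximal_indep_in e (~: A) M2 ->
  maximal_indep_in e [set: T] (M1 :|: M2).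
Proof.
case/maximal_indep_in_domP => /andP[M1A M1stable] domM1.
case/maximal_indep_in_domP => /andP[M2A M2stable] domM2.
apply/maximal_indep_in_domP; split.
  by rewrite /indep_in subsetT stableU_separated.
move=> x; rewrite !inE negb_or => /andP[/andP[xM1 xM2] _].
case xA: (x \in A).
  have [y yM1 exy] : exists2 y, y \in M1 & e x y by apply: domM1; rewrite inE xM1 xA.
  by exists y; rewrite ?inE ?yM1.
have [y yM2 exy] : exists2 y, y \in M2 & e x y by apply: domM2; rewrite !inE xM2 xA.
by exists y; rewrite ?inE ?yM2 ?orbT.
Qed.

Lemma alpha_in_split : alpha_in e [set: T] = alpha_in e A + alpha_in e (~: A).
Proof.
apply/eqP; rewrite eqn_leq; apply/andP; split.
  have [M indM <-] := alpha_in_attained e [set: T].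
  by rewrite -(cardsID A M) setDE leq_add // leq_card_alpha_in // (indep_inI _ indM).
have [M1 /andP[M1A M1stable] <-] := alpha_in_attained e A.
have [M2 /andP[M2A M2stable] <-] := alpha_in_attained e (~: A).
rewrite -(cardsU_subC M1A M2A) leq_card_alpha_in //.
by rewrite /indep_in subsetT stableU_separated.
Qed.

End Separated.

Lemma i_in_split (A : {set T}) : separated A ->
  i_in e [set: T] = i_in e A + i_in e (~: A).
Proof.
move=> A_sep; apply/eqP; rewrite eqn_leq; apply/andP; split.
  have [M1 maxM1 <-] := i_in_attained e A.
  have [M2 maxM2 <-] := i_in_attained e (~: A).
  case/andP: (maxM1) => /andP[M1A _] _; case/andP: (maxM2) => /andP[M2A _] _.
  by rewrite -(cardsU_subC M1A M2A) i_in_leq_card // (maximal_indep_inU A_sep).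
have [M maxM <-] := i_in_attained e [set: T].
rewrite -(cardsID A M) setDE leq_add // i_in_leq_card //.
  exact: maximal_indep_inI.
exact: (maximal_indep_inI (separatedC A_sep)).
Qed.

Lemma component_edge x y : e x y -> component e x = component e y.
Proof.
move=> exy; apply/setP => v; rewrite !inE; apply/idP/idP; apply: connect_trans.
  by apply: connect1; rewrite e_sym.
exact: connect1.
Qed.

Lemma Ucomp_separated : separated (Ucomp e).
Proof.
move=> x y xU; apply: contra => exy.
by move: xU; rewrite !inE /complete_component (component_edge exy).
Qed.

Lemma Ucomp_edge x y : x \in Ucomp e -> connect e x y -> x != y -> e x y.
Proof.
rewrite inE => /forall_inP/(_ x); rewrite inE connect0 => /(_ isT).
by move=> /forall_inP xy_edge xy; apply/implyP/xy_edge; rewrite inE.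
Qed.

Lemma leq_card_indep_maximal_Ucomp (I M : {set T}) :
  indep_in e (Ucomp e) I -> maximal_indep_in e (Ucomp e) M -> #|I| <= #|M|.
Proof.
case/andP => /subsetP IU /stableP Istable /maximal_indep_in_domP[_ domM].
have reachM x : x \in Ucomp e -> exists2 y, y \in M & connect e x y.
  move=> xU; have [xM | xM] := boolP (x \in M); first by exists x.
  have [y yM exy] : exists2 y, y \in M & e x y by apply: domM; rewrite inE xM.
  by exists y; last exact: connect1.
pose f x := odflt x [pick y in M | connect e x y].
have fP x : x \in Ucomp e -> (f x \in M) && connect e x (f x).
  case/reachM => y yM xy; rewrite /f; case: pickP => [z // | /(_ y)].
  by rewrite yM xy.
have f_inj : {in I &, injective f}.
  move=> x1 x2 x1I x2I fx12; apply/eqP; apply: contraT => x12.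
  have /andP[_ x1f] := fP x1 (IU _ x1I); have /andP[_ x2f] := fP x2 (IU _ x2I).
  have x1x2 : connect e x1 x2.
    by rewrite (connect_trans x1f) // fx12 (sym_connect_sym e_sym).
  by have := Istable x1 x2 x1I x2I; rewrite Ucomp_edge ?IU.
rewrite -(card_in_imset f_inj); apply/subset_leq_card/subsetP => _ /imsetP[x xI ->].
by have /andP[] := fP x (IU _ xI).
Qed.

Lemma alpha_in_Ucomp : alpha_in e (Ucomp e) = i_in e (Ucomp e).
Proof.
apply/eqP; rewrite eqn_leq i_in_leq_alpha_in andbT.
have [I indI <-] := alpha_in_attained e (Ucomp e).
have [M maxM <-] := i_in_attained e (Ucomp e).
exact: leq_card_indep_maximal_Ucomp.
Qed.

End SimpleGraph.

Theorem corollary3 (T : finType) (e : rel T)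
    (e_sym : symmetric e) (e_irr : irreflexive e) :
  mu_alpha_in e [set: T] = mu_alpha_in e (~: Ucomp e).
Proof.
have U_sep := Ucomp_separated e_sym.
rewrite /mu_alpha_in (alpha_in_split e_sym U_sep) (i_in_split e_sym e_irr U_sep).
by rewrite (alpha_in_Ucomp e_sym e_irr) subnDl.
Qed.
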